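(* Let $\mathcal G$ be a connected undirected graph on vertices $\{1,\dots,n\}$ with $m$ edges, where each edge $\{i,j\}$ carries $\beta_{ij}<0$ and $V_i>0$ for each vertex. Let $R\in\mathbb R^{n\times m}$ be the incidence matrix of $\mathcal G$ for an arbitrary orientation, $\Gamma=\mathrm{diag}(\gamma_k)$ with $\gamma_k=|\beta_{ij}|V_iV_j$ for edge $k\sim\{i,j\}$, and let $\sigma_i>0$ satisfy $\sum_{j\in\mathcal N_i}|\beta_{ij}|V_iV_j\le\frac12\sigma_i$ for each $i$, where $\mathcal N_i$ is the set of neighbors of $i$. With $\Sigma=\mathrm{diag}(\sigma_i)$, it holds that $\Gamma^{-1}-R^{\top}\Sigma^{-1}R\succeq0$.
   Context: Incidence matrix: $R_{ik}=1$ if vertex $i$ is the sink of edge $k$, $R_{ik}=-1$ if it is the source, and $R_{ik}=0$ otherwise. $\succeq0$ denotes positive semidefiniteness. *)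

From HB Require Import structures.
From mathcomp Require Import all_boot all_order all_algebra.
Set Implicit Arguments. Unset Strict Implicit. Unset Printing Implicit Defensive.
Import Order.TTheory GRing.Theory Num.Theory.
Local Open Scope ring_scope.

Definition incidence (R : ringType) (n m : nat) (src snk : 'I_m -> 'I_n)
  : 'M[R]_(n, m) :=
  \matrix_(i < n, k < m)
    (if i == snk k then 1 else if i == src k then -1 else 0).

Definition psd (R : numDomainType) (m : nat) (M : 'M[R]_m) : Prop :=
  M^T = M /\ forall x : 'cV[R]_m, 0 <= (x^T *m M *m x) 0 0.

Definition simple_graph (n : nat) (adj : rel 'I_n) : Prop :=
  (forall i, ~~ adj i i) /\ (forall i j, adj i j = adj j i).

Definition connected_graph (n : nat) (adj : rel 'I_n) : Prop :=
  forall i j, connect adj i j.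

Definition edge_enumeration (n m : nat) (adj : rel 'I_n)
  (src snk : 'I_m -> 'I_n) : Prop :=
  [/\ forall k, adj (src k) (snk k),
      forall k l, (src k = src l /\ snk k = snk l) \/
                  (src k = snk l /\ snk k = src l) -> k = l
    & forall i j, adj i j -> exists k,
          (src k = i /\ snk k = j) \/ (src k = j /\ snk k = i)].

(* For x in R^m the claim reads sum_i (R x)_i^2 / sigma_i <= sum_k x_k^2 / gamma_k.
   Entry i of R x is a signed sum of the x_k over the edges k at i, so weighted
   Cauchy-Schwarz gives (R x)_i^2 <= (sum_(k at i) gamma_k) (sum_(k at i) x_k^2 / gamma_k),
   and through the edge enumeration the first factor is the left side of the hypothesis
   on sigma_i, hence at most sigma_i / 2.  Summing over i counts every edge twice, which absorbs the 1/2. *)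

From HB Require Import structures.
From mathcomp Require Import all_boot all_order all_algebra.
From mathcomp Require Import ring.
Set Implicit Arguments.
Unset Strict Implicit.
Unset Printing Implicit Defensive.
Import Order.TTheory GRing.Theory Num.Theory.
Local Open Scope ring_scope.

Lemma invmx_diag (F : fieldType) n (d : 'rV[F]_n) :
  (forall i, d 0 i != 0) -> invmx (diag_mx d) = diag_mx (map_mx GRing.inv d).
Proof.
move=> d_neq0.
have d_inv : diag_mx d *m diag_mx (map_mx GRing.inv d) = 1%:M.
  by rewrite mulmx_diag; apply/matrixP => i j; rewrite !mxE; case: eqP => // _; rewrite mulfV.
have [d_unit _] := mulmx1_unit d_inv.
by rewrite -[RHS](mulKmx d_unit) d_inv mulmx1.
Qed.

Lemma quad_diag_mx (R : comNzRingType) n (d : 'rV[R]_n) (y : 'cV[R]_n) :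
  (y^T *m diag_mx d *m y) 0 0 = \sum_i d 0 i * y i 0 ^+ 2.
Proof. by rewrite mul_mx_diag !mxE; apply: eq_bigr => i _; rewrite !mxE; ring. Qed.

Lemma psd_diag_sub_congr (R : numDomainType) n m (d : 'rV[R]_m) (e : 'rV[R]_n)
    (A : 'M[R]_(n, m)) :
  (forall x : 'cV[R]_m, \sum_i e 0 i * (A *m x) i 0 ^+ 2 <= \sum_k d 0 k * x k 0 ^+ 2) ->
  psd (diag_mx d - A^T *m diag_mx e *m A).
Proof.
move=> quad_le; split.
  by rewrite linearB /= !trmx_mul trmxK !tr_diag_mx mulmxA.
move=> x; rewrite mulmxBr mulmxBl.
have -> : x^T *m (A^T *m diag_mx e *m A) *m x = (A *m x)^T *m diag_mx e *m (A *m x).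
  by rewrite trmx_mul !mulmxA.
rewrite [X in 0 <= X]mxE [X in _ + X]mxE subr_ge0 !quad_diag_mx; apply: quad_le.
Qed.

Lemma sqr_sumr_le_weighted (R : realFieldType) (I : finType) (P : pred I) (u w : I -> R) :
  (forall k, P k -> 0 < w k) ->
  (\sum_(k | P k) u k) ^+ 2 <= (\sum_(k | P k) w k) * \sum_(k | P k) u k ^+ 2 / w k.
Proof.
move=> w_gt0.
have amgm i k : P i -> P k ->
    u i * u k + u k * u i <= w i * (u k ^+ 2 / w k) + w k * (u i ^+ 2 / w i).
  move=> /w_gt0 wi_gt0 /w_gt0 wk_gt0.
  have -> : w i * (u k ^+ 2 / w k) + w k * (u i ^+ 2 / w i) =
      u i * u k + u k * u i + (u i * w k - u k * w i) ^+ 2 / (w i * w k).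
    by field; rewrite !gt_eqF.
  by rewrite lerDl divr_ge0 ?sqr_ge0 ?mulr_ge0 ?ltW.
rewrite expr2 !big_distrlr /= -(ler_pM2l (ltr0Sn R 1)) !mulr_natl !mulr2n.
rewrite {2}exchange_big {2}[\sum_(i | P i) \sum_(k | P k) w i * _]exchange_big /=.
rewrite -!big_split /=; apply: ler_sum => i Pi.
by rewrite -!big_split /=; apply: ler_sum => k Pk; apply: amgm.
Qed.

Section Incidence.
Variables (n m : nat) (src snk : 'I_m -> 'I_n).

Definition incident (i : 'I_n) : pred 'I_m := [pred k | (i == src k) || (i == snk k)].

Lemma incidence_mulmx_col (R : nzRingType) (x : 'cV[R]_m) i :
  (incidence R src snk *m x) i 0 = \sum_(k | incident i k) incidence R src snk i k * x k 0.
Proof.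
rewrite mxE [RHS]big_mkcond; apply: eq_bigr => k _ /=.
by case: ifP => // /negbT; rewrite negb_or !mxE => /andP[/negbTE-> /negbTE->]; rewrite mul0r.
Qed.

Lemma sqr_incidence (R : nzRingType) i k :
  incident i k -> incidence R src snk i k ^+ 2 = 1.
Proof. by rewrite mxE => /orP[] /eqP->; rewrite eqxx; [case: ifP|]; rewrite ?sqrrN expr1n. Qed.

Lemma sqr_incidence_mulmx_le (R : realFieldType) (w : 'I_m -> R) (x : 'cV[R]_m) i :
  (forall k, 0 < w k) ->
  (incidence R src snk *m x) i 0 ^+ 2 <=
    (\sum_(k | incident i k) w k) * \sum_(k | incident i k) x k 0 ^+ 2 / w k.
Proof.
move=> w_gt0; rewrite incidence_mulmx_col.
have -> : \sum_(k | incident i k) x k 0 ^+ 2 / w k =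
    \sum_(k | incident i k) (incidence R src snk i k * x k 0) ^+ 2 / w k.
  by apply: eq_bigr => k ik; rewrite exprMn sqr_incidence ?mul1r.
exact: sqr_sumr_le_weighted (fun k _ => w_gt0 k).
Qed.

Hypothesis loopless : forall k, src k != snk k.

Lemma sum_incident (V : nmodType) (c : 'I_m -> V) :
  \sum_i \sum_(k | incident i k) c k = (\sum_k c k) *+ 2.
Proof.
rewrite (eq_bigr (fun i => \sum_k if incident i k then c k else 0)) => [|i _]; last first.
  by rewrite big_mkcond.
rewrite exchange_big -sumrMnl /=; apply: eq_bigr => k _.
rewrite (bigD1 (src k)) //= (bigD1 (snk k)) /=; last by rewrite eq_sym loopless.
rewrite big1 => [|i /andP[/negbTE srcF /negbTE snkF]]; last by rewrite /incident /= srcF snkF.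
by rewrite /incident /= !eqxx orbT addr0 mulr2n.
Qed.

End Incidence.

Section EdgeEnumeration.
Variables (n m : nat) (adj : rel 'I_n) (src snk : 'I_m -> 'I_n).
Hypotheses (adj_sym : forall i j, adj i j = adj j i)
  (enum : edge_enumeration adj src snk).

Definition other_end (i : 'I_n) (k : 'I_m) : 'I_n := if i == src k then snk k else src k.

Lemma adj_other_end i k : incident src snk i k -> adj i (other_end i k).
Proof.
have [adj_edge _ _] := enum.
rewrite /incident /other_end /=.
by case: eqP => [-> _|_ /eqP->]; [|rewrite adj_sym]; apply: adj_edge.
Qed.

Lemma other_end_inj i : {in incident src snk i &, injective (other_end i)}.
Proof.
have [_ edge_inj _] := enum.
move=> k l; rewrite !inE /incident /other_end /=.
case: (eqVneq i (src k)) => [ik _|_ /eqP ik]; case: (eqVneq i (src l)) => [il _|_ /eqP il] e;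
  apply: edge_inj; [left | right | right | left]; split; congruence.
Qed.

Lemma other_end_surj i j : adj i j -> exists2 k, incident src snk i k & j = other_end i k.
Proof.
have [_ _ edge_surj] := enum.
move=> /edge_surj[k [[<- <-]|[<- <-]]]; exists k; rewrite /incident /other_end /= ?eqxx ?orbT //.
by case: eqP.
Qed.

Lemma sum_incident_edges (V : nmodType) (f : 'I_n -> 'I_n -> V) i :
  (forall i j, f i j = f j i) ->
  \sum_(k | incident src snk i k) f (src k) (snk k) = \sum_(j | adj i j) f i j.
Proof.
move=> f_sym.
have -> : \sum_(k | incident src snk i k) f (src k) (snk k) =
    \sum_(k in incident src snk i) f i (other_end i k).
  apply: eq_bigr => k; rewrite /incident /other_end /=.
  by case: eqP => [-> //|_ /eqP->]; rewrite f_sym.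
rewrite -(big_imset _ (@other_end_inj i)) /=; apply: eq_bigl => j.
apply/imsetP/idP => [[k ik ->]|/other_end_surj //]; exact: adj_other_end.
Qed.

End EdgeEnumeration.

Theorem lemma3 (R : realFieldType) (n m : nat) (adj : rel 'I_n)
  (src snk : 'I_m -> 'I_n) (beta : 'I_n -> 'I_n -> R) (V sigma : 'I_n -> R) :
  simple_graph adj ->
  connected_graph adj ->
  edge_enumeration adj src snk ->
  (forall i j, beta i j = beta j i) ->
  (forall i j, adj i j -> beta i j < 0) ->
  (forall i, 0 < V i) ->
  (forall i, 0 < sigma i) ->
  (forall i, \sum_(j | adj i j) `|beta i j| * V i * V j <= sigma i / 2) ->
  let gamma := fun k : 'I_m =>
    `|beta (src k) (snk k)| * V (src k) * V (snk k) in
  let Gam := diag_mx (\row_k gamma k) in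
  let Sig := diag_mx (\row_i sigma i) in
  let Rinc := incidence R src snk in
  psd (invmx Gam - Rinc^T *m invmx Sig *m Rinc).
Proof.
move=> [adj_irr adj_sym] _ enum beta_sym beta_lt0 V_gt0 sigma_gt0 sigma_bound gamma Gam Sig Rinc.
have [adj_edge _ _] := enum.
have loopless k : src k != snk k.
  by apply: contraNneq (adj_irr (src k)) => {2}->; apply: adj_edge.
have gamma_gt0 k : 0 < gamma k.
  by rewrite !mulr_gt0 ?normr_gt0 ?ltr0_neq0 ?beta_lt0.
rewrite /Gam /Sig !invmx_diag => [|i|k]; [|by rewrite mxE gt_eqF..].
apply: psd_diag_sub_congr => x.
pose c k := x k 0 ^+ 2 / gamma k.
have vertex_bound i :
    (sigma i)^-1 * (Rinc *m x) i 0 ^+ 2 <= (\sum_(k | incident src snk i k) c k) / 2.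
  have degree_bound : \sum_(k | incident src snk i k) gamma k <= sigma i / 2.
    rewrite (sum_incident_edges adj_sym enum (f := fun i j => `|beta i j| * V i * V j)) //.
    by move=> i' j'; rewrite beta_sym mulrAC.
  rewrite -ler_pdivlMl ?invr_gt0 // invrK mulrA mulrAC.
  apply: le_trans (sqr_incidence_mulmx_le src snk x i gamma_gt0) _.
  by rewrite ler_wpM2r ?sumr_ge0 // => k _; rewrite divr_ge0 ?sqr_ge0 ?ltW.
rewrite (eq_bigr (fun i => (sigma i)^-1 * (Rinc *m x) i 0 ^+ 2)) => [|i _]; last first.
  by rewrite !mxE.
apply: le_trans (ler_sum _ (fun i _ => vertex_bound i)) _.
rewrite -mulr_suml (sum_incident loopless) mulr2n mulrDl -splitr.
by apply: ler_sum => k _; rewrite !mxE mulrC.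
Qed.
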